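(* Let $k>1$ be an odd square-free integer and let $K_k=\mathbb{Q}\Big(\sqrt{-k(2+\sqrt2)}\Big)$. Then \[ \tfrac{1}{2359296}\, D_{K_k} \le M(\mathcal{O}_{K_k}) \le \tfrac14\, D_{K_k}. \]
   Context: For a nonconstant polynomial $f(x)=c\prod_{i=1}^d (x-\alpha_i)\in\mathbb{C}[x]$, the Mahler measure is $M(f)=|c|\prod_{|\alpha_i|\ge 1}|\alpha_i|$. For an algebraic number $\alpha$, $M(\alpha)$ is the Mahler measure of its minimal polynomial over $\mathbb{Z}$ (with content $1$). For a number field $K$ with ring of integers $\mathcal{O}_K$ and absolute discriminant $D_K$, $M(\mathcal{O}_K)=\min\{M(\alpha):\alpha\in\mathcal{O}_K,\ \mathbb{Q}(\alpha)=K\}$. *)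

From HB Require Import structures.
From mathcomp Require Import all_boot all_order all_algebra all_field.
Set Implicit Arguments. Unset Strict Implicit. Unset Printing Implicit Defensive.
Import Order.TTheory GRing.Theory Num.Theory.
Local Open Scope ring_scope.

(* A number field K = Q(theta) is represented by a generator theta : algC.    *)

Definition squarefree (k : nat) : Prop :=
  forall p : nat, prime p -> ~~ (p * p %| k)%N.

Definition in_QQ (theta x : algC) : Prop :=
  exists p : {poly rat}, x = (map_poly ratr p).[theta].

Definition in_OK (theta x : algC) : Prop := in_QQ theta x /\ x \in Aint.

Definition generates (theta x : algC) : Prop :=
  in_QQ theta x /\ in_QQ x theta.

Definition mahler_poly (p : {poly algC}) (m : algC) : Prop :=
  p != 0 /\
  exists s : seq algC,
    p = lead_coef p *: \prod_(a <- s) ('X - a%:P) /\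
    m = `|lead_coef p| * \prod_(a <- s | 1 <= `|a|) `|a|.

(* P is the minimal polynomial of x over Z with content 1
   (positive leading coefficient), i.e. the primitive integer polynomial
   associate to the minimal polynomial of x over Q. *)
Definition int_minpoly (x : algC) (P : {poly int}) : Prop :=
  zcontents P = 1 /\ map_poly intr P %= minCpoly x.

Definition mahler (x m : algC) : Prop :=
  exists P : {poly int}, int_minpoly x P /\ mahler_poly (map_poly intr P) m.

Definition mahler_OK (theta m : algC) : Prop :=
  (exists x, in_OK theta x /\ generates theta x /\ mahler x m) /\
  (forall x m', in_OK theta x -> generates theta x -> mahler x m' -> m <= m').

(* The n embeddings of K into C
   send p(theta) to p(r_j), where r_0..r_{n-1} are the roots of the minimal
   polynomial of theta; b_i = (Pb i)(theta) is an integral basis, i.e. a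
   Z-basis of O_K; D_K = |det(sigma_j(b_i))^2|. *)
Definition abs_disc (theta D : algC) : Prop :=
  exists (n : nat) (r : 'I_n -> algC) (Pb : 'I_n -> {poly rat}),
    minCpoly theta = \prod_(j < n) ('X - (r j)%:P) /\
    (forall i, (map_poly ratr (Pb i)).[theta] \in Aint) /\
    (forall x, in_OK theta x ->
       exists c : 'I_n -> int,
         x = \sum_(i < n) (c i)%:~R * (map_poly ratr (Pb i)).[theta]) /\
    (forall c : 'I_n -> int,
       \sum_(i < n) (c i)%:~R * (map_poly ratr (Pb i)).[theta] = 0 ->
       forall i, c i = 0) /\
    D = `| (\det (\matrix_(i < n, j < n) (map_poly ratr (Pb i)).[r j])) ^+ 2 |.

From HB Require Import structures.
From mathcomp Require Import all_boot all_order all_algebra all_field.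
From mathcomp Require Import ring zify.
Set Implicit Arguments. Unset Strict Implicit. Unset Printing Implicit Defensive.
Import Order.TTheory GRing.Theory Num.Theory.
Local Open Scope ring_scope.

(* theta has minimal polynomial X^4 + 4kX^2 + 2k^2, whose roots are +-theta and +-phi with
   phi^2 = -k(2 - sqrt2), so the four embeddings of K are determined by theta -> +-theta, +-phi.
   For k odd and squarefree, O_K = Z[sqrt2] + Z[sqrt2] theta: for an integral
   a + b sqrt2 + (c + d sqrt2) theta with rational coordinates, the traces and relative norms
   down to Q(sqrt2) lie in Z[sqrt2], which puts 2a, 2b, 4kc, 4kd in Z, and a k-adic and
   2-adic analysis of the norm equations then gives a, b, c, d in Z.  Hence D_K = 2048 k^2.
   For a generator x = alpha + beta theta of K in O_K, each conjugate of x is a real number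
   plus a purely imaginary one, so |sigma_j x| >= |sigma_j beta| |sigma_j theta|; the
   product of these bounds is |N(beta)|^2 2k^2 >= 2k^2 = M(theta).  So M(O_K) = 2k^2 =
   D_K / 1024. *)

Lemma squarefree_dvdn_sqr k n : squarefree k -> (k %| n * n)%N -> (k %| n)%N.
Proof.
move=> sqf_k dvd_k_nn.
have [->|n_gt0] := posnP n; first exact: dvdn0.
have [k0|k_gt0] := posnP k; first by have := sqf_k 2 isT; rewrite k0 dvdn0.
apply/dvdn_partP => // p; rewrite mem_primes => /and3P[p_prime _ _].
rewrite p_part pfactor_dvdn //.
have : ~~ (2 <= logn p k)%N by rewrite -pfactor_dvdn // expnS expn1 sqf_k.
have nn_gt0 : (0 < n * n)%N by rewrite muln_gt0 n_gt0.
have := dvdn_leq_log p nn_gt0 dvd_k_nn; rewrite lognM //; lia.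
Qed.

Lemma squarefree_dvdz_sqr k (m : int) : squarefree k -> (k%:Z %| m * m)%Z -> (k%:Z %| m)%Z.
Proof. by move=> sqf_k; rewrite !dvdzE abszM; apply: squarefree_dvdn_sqr. Qed.

Lemma odd_dvdz_double k (m : int) : odd k -> (k%:Z %| 2 * m)%Z -> (k%:Z %| m)%Z.
Proof. by move=> odd_k; rewrite !dvdzE abszM Gauss_dvdr // coprimen2. Qed.

Lemma int_even_or_odd (x : int) : exists q, x = 2 * q \/ x = 2 * q + 1.
Proof. by exists (x %/ 2)%Z; lia. Qed.

Lemma double_sqr_sub_sqr_dvdz (E G N : int) :
  2 * (E * E) - G * G = 8 * N -> (2 %| E)%Z /\ (4 %| G)%Z.
Proof.
move=> eq8.
have [G1 [G_even|G_odd]] := int_even_or_odd G; subst G; last lia.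
have [E1 [E_even|E_odd]] := int_even_or_odd E; subst E; last lia.
have [G2 [G1_even|G1_odd]] := int_even_or_odd G1; subst G1; last lia.
by split; apply/dvdzP; [exists E1 | exists G2]; ring.
Qed.

Lemma odd_squarefree_dvdz_quadform k (g d : int) : odd k -> squarefree k ->
  (k%:Z %| g * g + 2 * (d * d) + 4 * (g * d))%Z ->
  (k%:Z %| 2 * (g * g) + 4 * (d * d) + 4 * (g * d))%Z ->
  (k%:Z %| g)%Z /\ (k%:Z %| d)%Z.
Proof.
move=> odd_k sqf_k /dvdzP[q1 eq1] /dvdzP[q0 eq0].
set K := k%:Z in eq1 eq0 *.
have /dvdzP[w def_gd] : (K %| g * d)%Z.
  by do 2!apply: (odd_dvdz_double odd_k); apply/dvdzP; exists (2 * q1 - q0); lia.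
have eq_sum : g * g + 2 * (d * d) = (q1 - 4 * w) * K by lia.
split; do 2!apply: (squarefree_dvdz_sqr sqf_k).
  apply/dvdzP; exists (g * g * (q1 - 4 * w) - 2 * (g * d) * w).
  transitivity (g * g * (g * g + 2 * (d * d)) - 2 * (g * d) * (g * d)); first ring.
  by rewrite eq_sum def_gd; ring.
apply: (odd_dvdz_double odd_k); apply/dvdzP.
exists (d * d * (q1 - 4 * w) - (g * d) * w).
transitivity (d * d * (g * g + 2 * (d * d)) - (g * d) * (g * d)); first ring.
by rewrite eq_sum def_gd; ring.
Qed.

Lemma odd_dvdz_two_adic k (A B g d N0 N1 : int) : odd k ->
  16 * N0 = 4 * (A * A) + 8 * (B * B) + k%:Z * (2 * (g * g) + 4 * (d * d) + 4 * (g * d)) ->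
  16 * N1 = 8 * (A * B) + k%:Z * (g * g + 2 * (d * d) + 4 * (g * d)) ->
  [/\ (2 %| A)%Z, (2 %| B)%Z, (4 %| g)%Z & (4 %| d)%Z].
Proof.
move=> odd_k eq0 eq1.
have [K def_k] : exists K, k%:Z = 2 * K + 1.
  by exists (k./2)%:Z; have := odd_double_half k; rewrite odd_k /=; lia.
rewrite def_k in eq0 eq1.
have [g1 [g_even|g_odd]] := int_even_or_odd g; subst g; last lia.
have [d1 [d_even|d_odd]] := int_even_or_odd d; subst d; last lia.
have [g2 [g1_even|g1_odd]] := int_even_or_odd g1; subst g1; last lia.
have [A1 [A_even|A_odd]] := int_even_or_odd A; subst A; last lia.
have [B1 [B_even|B_odd]] := int_even_or_odd B; subst B; last lia.
have [d2 [d1_even|d1_odd]] := int_even_or_odd d1; subst d1; last lia.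
by split; apply/dvdzP; [exists A1 | exists B1 | exists g2 | exists d2]; ring.
Qed.

(* The two equations are 16k times rel_norm0 = N0 and rel_norm1 = N1 (defined below),
   written in A = 2a, B = 2b, g = 4kc and d = 4kd. *)
Lemma int_coords_of_norm_eqs k (A B g d N0 N1 : int) : odd k -> squarefree k ->
  16 * k%:Z * N0 = 4 * k%:Z * (A * A) + 8 * k%:Z * (B * B) + 2 * (g * g)
                   + 4 * (d * d) + 4 * (g * d) ->
  16 * k%:Z * N1 = 8 * k%:Z * (A * B) + g * g + 2 * (d * d) + 4 * (g * d) ->
  [/\ (2 %| A)%Z, (2 %| B)%Z, (4 * k%:Z %| g)%Z & (4 * k%:Z %| d)%Z].
Proof.
move=> odd_k sqf_k eq0 eq1; set K := k%:Z in eq0 eq1 *.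
have [/dvdzP[g' def_g] /dvdzP[d' def_d]] : (K %| g)%Z /\ (K %| d)%Z.
  apply: odd_squarefree_dvdz_quadform => //; apply/dvdzP.
    by exists (16 * N1 - 8 * (A * B)); lia.
  by exists (16 * N0 - 4 * (A * A) - 8 * (B * B)); lia.
have K_neq0 : K != 0 by rewrite /K eqz_nat -lt0n odd_gt0.
have [||dvd_A dvd_B dvd_g' dvd_d'] := @odd_dvdz_two_adic k A B g' d' N0 N1 odd_k.
- apply: (mulIf K_neq0); transitivity (16 * K * N0); first ring.
  by rewrite eq0 def_g def_d; ring.
- apply: (mulIf K_neq0); transitivity (16 * K * N1); first ring.
  by rewrite eq1 def_g def_d; ring.
by split; rewrite // ?def_g ?def_d dvdz_mul.
Qed.

Lemma conjC_sqr_lt0 (z : algC) : z ^+ 2 < 0 -> z^* = - z.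
Proof.
move=> z2_lt0.
have conj_sqr : z^* ^+ 2 = z ^+ 2 by rewrite -rmorphXn; apply/CrealP/ltr0_real.
have : (z^* - z) * (z^* + z) = 0.
  by rewrite mulrDr !mulrBl -!expr2 conj_sqr [z * z^*]mulrC; ring.
move/eqP; rewrite mulf_eq0 subr_eq0 addr_eq0 => /orP[/eqP z_real|/eqP //].
by move: z2_lt0; rewrite le_gtF // real_exprn_even_ge0 //; apply/CrealP.
Qed.

Lemma normC_imag_le (u w : algC) : u \is Num.real -> w^* = - w -> `|w| <= `|u + w|.
Proof.
move=> u_real w_imag.
have pythagoras : `|u + w| ^+ 2 = u ^+ 2 + `|w| ^+ 2.
  by rewrite !normCK rmorphD /= (CrealP u_real) w_imag; ring.
rewrite -(ler_pXn2r (n := 2)) ?nnegrE ?normr_ge0 // pythagoras lerDr.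
exact: real_exprn_even_ge0.
Qed.

Lemma Num_int_of_dvdz (x : algC) (n m : int) :
  n != 0 -> (n %| m)%Z -> n%:~R * x = m%:~R -> x \in Num.int.
Proof.
move=> n_neq0 /dvdzP[q ->]; rewrite intrM mulrC.
have nR_neq0 : n%:~R != 0 :> algC by rewrite intr_eq0.
by move/(mulIf nR_neq0)->; exact: rpred_int.
Qed.

Lemma det_mx4 (R : comNzRingType) (f : nat -> nat -> R) :
  \det (\matrix_(i < 4, j < 4) f i j) =
    f 0 0 * (f 1 1 * (f 2 2 * f 3 3 - f 2 3 * f 3 2) - f 1 2 * (f 2 1 * f 3 3 - f 2 3 * f 3 1)
             + f 1 3 * (f 2 1 * f 3 2 - f 2 2 * f 3 1))
  - f 0 1 * (f 1 0 * (f 2 2 * f 3 3 - f 2 3 * f 3 2) - f 1 2 * (f 2 0 * f 3 3 - f 2 3 * f 3 0)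
             + f 1 3 * (f 2 0 * f 3 2 - f 2 2 * f 3 0))
  + f 0 2 * (f 1 0 * (f 2 1 * f 3 3 - f 2 3 * f 3 1) - f 1 1 * (f 2 0 * f 3 3 - f 2 3 * f 3 0)
             + f 1 3 * (f 2 0 * f 3 1 - f 2 1 * f 3 0))
  - f 0 3 * (f 1 0 * (f 2 1 * f 3 2 - f 2 2 * f 3 1) - f 1 1 * (f 2 0 * f 3 2 - f 2 2 * f 3 0)
             + f 1 2 * (f 2 0 * f 3 1 - f 2 1 * f 3 0)).
Proof.
do 3!rewrite !(expand_det_row _ ord0) !big_ord_recl !big_ord0 /cofactor.
by rewrite !det_mx11 !mxE /=; ring.
Qed.

Section NormProducts.

Variable R : numDomainType.

Lemma prod_norm_le_ge1 (s : seq R) : \prod_(a <- s) `|a| <= \prod_(a <- s | 1 <= `|a|) `|a|.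
Proof.
elim: s => [|a s IH]; first by rewrite !big_nil.
rewrite !big_cons; case: ifP => a_ge1; first by rewrite ler_pM ?normr_ge0 ?prodr_ge0.
apply: le_trans IH; rewrite ler_piMl ?prodr_ge0 // ltW //.
by rewrite real_ltNge ?normr_real ?real1 ?a_ge1.
Qed.

Lemma prod_norm_ge1_subseq (l s : seq R) : uniq l -> {subset l <= s} ->
  \prod_(a <- l | 1 <= `|a|) `|a| <= \prod_(a <- s | 1 <= `|a|) `|a|.
Proof.
elim: s l => [|z s IH] l l_uniq l_sub.
  by case: l l_uniq l_sub => [|y l] // _ /(_ y); rewrite !inE eqxx => /(_ isT).
have notz_sub : {subset rem z l <= s}.
  move=> y y_rem; have y_neq_z : y != z.
    by apply: contraTneq y_rem => ->; rewrite (rem_filter _ l_uniq) mem_filter /= eqxx.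
  by have := l_sub y (mem_rem y_rem); rewrite inE (negbTE y_neq_z).
rewrite big_cons; have [z_l|z_notl] := boolP (z \in l).
  rewrite (perm_big _ (perm_to_rem z_l)) big_cons.
  case: ifP => _; last exact: IH (rem_uniq _ l_uniq) notz_sub.
  by rewrite ler_pM ?normr_ge0 ?prodr_ge0 ?IH ?rem_uniq.
have l_sub' : {subset l <= s}.
  move=> y y_l; have := l_sub y y_l; rewrite inE; case: eqP => // eq_yz.
  by move: z_notl; rewrite -eq_yz y_l.
case: ifP => z_ge1; last exact: IH.
apply: le_trans (IH l l_uniq l_sub') _; apply: ler_peMl => //.
by apply: prodr_ge0 => a _; apply: normr_ge0.
Qed.

End NormProducts.

Lemma mahler_poly_ge_prod_roots (p : {poly algC}) m (l : seq algC) :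
  mahler_poly p m -> lead_coef p \in Num.int -> uniq l -> all (root p) l ->
  \prod_(a <- l) `|a| <= m.
Proof.
move=> [p_neq0 [s [def_p ->]]] lc_int l_uniq /allP l_roots.
have lc_ge1 : 1 <= `|lead_coef p| by rewrite norm_intr_ge1 ?lead_coef_eq0.
have l_sub : {subset l <= s}.
  move=> x /l_roots; rewrite {1}def_p rootZ ?lead_coef_eq0 //.
  by rewrite root_prod_XsubC.
apply: le_trans (prod_norm_le_ge1 l) _; apply: le_trans (prod_norm_ge1_subseq l_uniq l_sub) _.
apply: ler_peMl => //.
by apply: prodr_ge0 => a _; apply: normr_ge0.
Qed.

Definition sqrt2 : algC := sqrtC 2.

Lemma sqrt2_sq : sqrt2 ^+ 2 = 2.
Proof. exact: sqrtCK. Qed.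

Lemma sqrt2_gt0 : 0 < sqrt2.
Proof. by rewrite sqrtC_gt0 ltr0n. Qed.

Lemma sqrt2_real : sqrt2 \is Num.real.
Proof. exact/gtr0_real/sqrt2_gt0. Qed.

Lemma sqrt2_lt2 : sqrt2 < 2.
Proof.
rewrite -(ltr_pXn2r (n := 2)) ?nnegrE ?ler0n ?ltW ?sqrt2_gt0 //.
by rewrite sqrt2_sq -natrX ltr_nat.
Qed.

Lemma sqrt2_mul3_lt5 : sqrt2 * 3%:R < 5%:R.
Proof.
rewrite -(ltr_pXn2r (n := 2)) ?nnegrE ?ler0n ?mulr_ge0 ?ler0n ?ltW ?sqrt2_gt0 //.
by rewrite exprMn sqrt2_sq -!natrX -natrM ltr_nat.
Qed.

Lemma sqrt2_Aint : sqrt2 \in Aint.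
Proof.
apply: (@root_monic_Aint ('X^2 - 2%:P)).
- by rewrite /root !hornerE sqrt2_sq subrr.
- exact: monicXnsubC.
- apply/polyOverP => i; rewrite coefB coefXn coefC rpredB ?rpred_nat //.
  by case: (_ == _); rewrite ?rpred0 ?rpred_nat.
Qed.

Lemma sqrt2_notin_Crat : sqrt2 \notin Crat.
Proof.
apply/negP=> sqrt2_rat.
have : sqrt2 \in Num.nat by rewrite natrEint Cint_rat_Aint ?sqrt2_Aint ?ltW ?sqrt2_gt0.
case/natrP=> m def_sqrt2; have := sqrt2_sq.
rewrite def_sqrt2 -natrX => /eqP; rewrite (eqr_nat _ _ 2) => /eqP m2_eq2.
have : (m <= 1)%N \/ (2 <= m)%N by lia.
by case=> m_bound; nia.
Qed.

Lemma Crat_sqrt2_eq0 c d : c \in Crat -> d \in Crat -> c + d * sqrt2 = 0 -> c = 0 /\ d = 0.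
Proof.
move=> c_rat d_rat cd0; have [d0|d_neq0] := eqVneq d 0.
  by move: cd0; rewrite d0 mul0r addr0.
have : sqrt2 = - c / d.
  by apply: (mulIf d_neq0); rewrite divfK // mulrC; apply/eqP; rewrite -addr_eq0 addrC cd0.
by move=> def_sqrt2; move: sqrt2_notin_Crat; rewrite def_sqrt2 rpredM ?rpredN ?rpredV.
Qed.

Lemma Aint_sqrt2_coords e f : e \in Crat -> f \in Crat ->
  e + f * sqrt2 \in Aint -> e - f * sqrt2 \in Aint -> e \in Num.int /\ f \in Num.int.
Proof.
move=> e_rat f_rat Aint_plus Aint_minus.
have /intrP[E defE] : 2 * e \in Num.int.
  apply: Cint_rat_Aint; first by rewrite rpredM ?rpred_nat.
  by rewrite (_ : 2 * e = e + f * sqrt2 + (e - f * sqrt2)); [exact: rpredD | ring].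
have /intrP[G defG] : 4 * f \in Num.int.
  apply: Cint_rat_Aint; first by rewrite rpredM ?rpred_nat.
  have sqrt2_sqr := sqrt2_sq.
  rewrite (_ : 4 * f = sqrt2 * (e + f * sqrt2 - (e - f * sqrt2))); last by ring: sqrt2_sqr.
  by rewrite rpredM ?sqrt2_Aint // rpredB.
have /intrP[N defN] : e * e - 2 * (f * f) \in Num.int.
  apply: Cint_rat_Aint; first by rewrite rpredB ?rpredM ?rpred_nat.
  have sqrt2_sqr := sqrt2_sq.
  rewrite (_ : e * e - 2 * (f * f) = (e + f * sqrt2) * (e - f * sqrt2)); last by ring: sqrt2_sqr.
  exact: rpredM.
have [/dvdzP[E' def_E] /dvdzP[G' def_G]] : (2 %| E)%Z /\ (4 %| G)%Z.
  apply: (double_sqr_sub_sqr_dvdz (N := N)).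
  by apply: (@intr_inj algC); rewrite !rmorphB !rmorphM /= -defE -defG -defN; ring.
split; apply/intrP; [exists E' | exists G'].
  by apply: (mulfI (x := 2)); rewrite ?pnatr_eq0 // defE def_E rmorphM /= mulrC.
by apply: (mulfI (x := 4)); rewrite ?pnatr_eq0 // defG def_G rmorphM /= mulrC.
Qed.


Section QuarticField.

Variable k : nat.
Hypothesis k_gt0 : (0 < k)%N.

Definition theta : algC := sqrtC (- k%:R * (2 + sqrt2)).
Definition phi : algC := sqrtC (- k%:R * (2 - sqrt2)).

Lemma natr_k_neq0 : k%:R != 0 :> algC.
Proof. by rewrite pnatr_eq0 -lt0n. Qed.

Lemma theta_sq : theta ^+ 2 = - k%:R * (2 + sqrt2).
Proof. exact: sqrtCK. Qed.

Lemma phi_sq : phi ^+ 2 = - k%:R * (2 - sqrt2).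
Proof. exact: sqrtCK. Qed.

Lemma theta_sq_lt0 : theta ^+ 2 < 0.
Proof.
by rewrite theta_sq mulNr oppr_lt0 mulr_gt0 ?ltr0n ?addr_gt0 ?sqrt2_gt0.
Qed.

Lemma phi_sq_lt0 : phi ^+ 2 < 0.
Proof. by rewrite phi_sq mulNr oppr_lt0 mulr_gt0 ?ltr0n // subr_gt0 sqrt2_lt2. Qed.

Lemma theta_neq0 : theta != 0.
Proof. by apply: contraTneq theta_sq_lt0 => ->; rewrite expr0n ltxx. Qed.

Lemma phi_neq0 : phi != 0.
Proof. by apply: contraTneq phi_sq_lt0 => ->; rewrite expr0n ltxx. Qed.

Lemma normC_theta_sq : `|theta| ^+ 2 = k%:R * (2 + sqrt2).
Proof.
by rewrite normCK (conjC_sqr_lt0 theta_sq_lt0) mulrN -expr2 theta_sq mulNr opprK.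
Qed.

Lemma normC_phi_sq : `|phi| ^+ 2 = k%:R * (2 - sqrt2).
Proof. by rewrite normCK (conjC_sqr_lt0 phi_sq_lt0) mulrN -expr2 phi_sq mulNr opprK. Qed.

(* The four embeddings of Q(theta) into C: the j-th one maps theta to [sigma_theta j] and
   sqrt2 = - theta^2 / k - 2 to [sigma_sqrt2 j]. *)
Definition sigma_theta (j : 'I_4) : algC := nth 0 [:: theta; - theta; phi; - phi] j.
Definition sigma_sqrt2 (j : 'I_4) : algC := nth 0 [:: sqrt2; sqrt2; - sqrt2; - sqrt2] j.

Definition sigma_coords (a b c d : algC) (j : 'I_4) : algC :=
  a + b * sigma_sqrt2 j + (c + d * sigma_sqrt2 j) * sigma_theta j.

Lemma sigma_sqrt2_sq j : sigma_sqrt2 j ^+ 2 = 2.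
Proof. by case: j => [[|[|[|[|]]]] //= ?]; rewrite /sigma_sqrt2 /= ?sqrrN sqrt2_sq. Qed.

Lemma sigma_theta_sq j : sigma_theta j ^+ 2 = - k%:R * (2 + sigma_sqrt2 j).
Proof.
by case: j => [[|[|[|[|]]]] //= ?]; rewrite /sigma_theta /sigma_sqrt2 /= ?sqrrN ?theta_sq ?phi_sq.
Qed.

Lemma sigma_sqrt2_real j : sigma_sqrt2 j \is Num.real.
Proof. by case: j => [[|[|[|[|]]]] //= ?]; rewrite /sigma_sqrt2 /= ?realN sqrt2_real. Qed.

Lemma sigma_theta_conj j : (sigma_theta j)^* = - sigma_theta j.
Proof.
have [conj_theta conj_phi] := (conjC_sqr_lt0 theta_sq_lt0, conjC_sqr_lt0 phi_sq_lt0).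
by case: j => [[|[|[|[|]]]] //= ?]; rewrite /sigma_theta /= ?rmorphN /= ?conj_theta ?conj_phi.
Qed.

Lemma horner_sigma_coords (p : {poly rat}) : exists a b c d : rat, forall j,
  (map_poly ratr p).[sigma_theta j] = sigma_coords (ratr a) (ratr b) (ratr c) (ratr d) j.
Proof.
elim/poly_ind: p => [|p c0 [a [b [c [d IH]]]]].
  by exists 0, 0, 0, 0 => j; rewrite rmorph0 horner0 /sigma_coords !rmorph0; ring.
exists (c0 - 2 * k%:R * c - 2 * k%:R * d), (- k%:R * c - 2 * k%:R * d), a, b => j.
rewrite rmorphD rmorphM /= map_polyX map_polyC /= hornerD hornerMX hornerC IH /sigma_coords.
rewrite !(rmorphD, rmorphB, rmorphN, rmorphM, rmorph_nat) /=.
have [sqrt2_sqr theta_sqr] := (sigma_sqrt2_sq j, sigma_theta_sq j).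
by ring: sqrt2_sqr theta_sqr.
Qed.

Lemma Crat_coords_eq0 a b c d : a \in Crat -> b \in Crat -> c \in Crat -> d \in Crat ->
  a + b * sqrt2 + (c + d * sqrt2) * theta = 0 -> [/\ a = 0, b = 0, c = 0 & d = 0].
Proof.
move=> a_rat b_rat c_rat d_rat eq0.
have real_coords u v : u \in Crat -> v \in Crat -> (u + v * sqrt2)^* = u + v * sqrt2.
  by move=> u_rat v_rat; apply/CrealP; rewrite realD ?realM ?sqrt2_real ?Creal_Crat.
have eq0_conj : a + b * sqrt2 - (c + d * sqrt2) * theta = 0.
  move/(congr1 Num.conj): eq0.
  by rewrite rmorphD rmorphM /= !real_coords // (conjC_sqr_lt0 theta_sq_lt0) rmorph0 mulrN.
have : (c + d * sqrt2) * theta *+ 2 = 0.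
  transitivity (a + b * sqrt2 + (c + d * sqrt2) * theta
                - (a + b * sqrt2 - (c + d * sqrt2) * theta)); first ring.
  by rewrite eq0 eq0_conj subrr.
move/eqP; rewrite mulrn_eq0 /= mulf_eq0 (negbTE theta_neq0) orbF => /eqP cd0.
have [c0 d0] := Crat_sqrt2_eq0 c_rat d_rat cd0.
by move: eq0; rewrite cd0 mul0r addr0 => /(Crat_sqrt2_eq0 a_rat b_rat)[a0 b0].
Qed.

Definition quartic : {poly int} := 'X^4 + (4 * k%:R) *: 'X^2 + (2 * k%:R ^+ 2)%:P.

Lemma map_quartic (R : nzRingType) :
  map_poly intr quartic = 'X^4 + (4 * k%:R) *: 'X^2 + (2 * k%:R ^+ 2)%:P :> {poly R}.
Proof.
rewrite !rmorphD /= map_polyZ !map_polyXn map_polyC /=.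
by rewrite !(rmorphM, rmorphXn) /= !rmorph_nat.
Qed.

Lemma quartic_factor :
  map_poly intr quartic = \prod_(j < 4) ('X - (sigma_theta j)%:P) :> {poly algC}.
Proof.
rewrite map_quartic !big_ord_recl big_ord0 /sigma_theta /= !polyCN.
set T := theta%:P; set P := phi%:P.
have theta_sqr : T * T = (- k%:R * (2 + sqrt2))%:P by rewrite -polyCM -expr2 theta_sq.
have phi_sqr : P * P = (- k%:R * (2 - sqrt2))%:P by rewrite -polyCM -expr2 phi_sq.
transitivity ('X^4 - (T * T + P * P) * 'X^2 + (T * T) * (P * P)); last ring.
rewrite -mul_polyC theta_sqr phi_sqr -polyCD -polyCM -mulNr -polyCN.
have sqrt2_sqr := sqrt2_sq.
by congr ('X^4 + _%:P * _ + _%:P); ring: sqrt2_sqr.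
Qed.

Lemma map_quartic_monic : (map_poly intr quartic : {poly algC}) \is monic.
Proof. by rewrite quartic_factor monic_prod_XsubC. Qed.

Lemma quartic_monic : quartic \is monic.
Proof.
rewrite monicE; apply/eqP/(@intr_inj algC).
by rewrite -(lead_coef_map_inj (@intr_inj algC) (mulr0z 1)); apply/monicP/map_quartic_monic.
Qed.

Lemma root_quartic_sigma j : root (map_poly intr quartic) (sigma_theta j).
Proof.
rewrite quartic_factor /root horner_prod; apply/prodf_eq0.
by exists j => //; rewrite !hornerE subrr.
Qed.

Lemma sigma_theta_Aint j : sigma_theta j \in Aint.
Proof.
apply: root_monic_Aint (root_quartic_sigma j) map_quartic_monic _.
by apply/polyOverP => i; rewrite coef_map /= rpred_int.
Qed.

Lemma Crat_powers_theta_eq0 r0 r1 r2 r3 :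
  r0 \in Crat -> r1 \in Crat -> r2 \in Crat -> r3 \in Crat ->
  r0 + r1 * theta + r2 * theta ^+ 2 + r3 * theta ^+ 3 = 0 ->
  [/\ r0 = 0, r1 = 0, r2 = 0 & r3 = 0].
Proof.
move=> r0_rat r1_rat r2_rat r3_rat eq0.
have [] := @Crat_coords_eq0 (r0 - 2 * k%:R * r2) (- k%:R * r2)
                            (r1 - 2 * k%:R * r3) (- k%:R * r3).
- by rewrite rpredB ?rpredM ?rpred_nat.
- by rewrite rpredM ?rpredN ?rpred_nat.
- by rewrite rpredB ?rpredM ?rpred_nat.
- by rewrite rpredM ?rpredN ?rpred_nat.
- have theta_sqr := theta_sq.
  by rewrite -[RHS]eq0; ring: theta_sqr.
move=> /eqP + /eqP + /eqP + /eqP.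
rewrite !mulNr !oppr_eq0 !mulf_eq0 (negbTE natr_k_neq0) /= => /eqP + /eqP r2_0 /eqP + /eqP r3_0.
by rewrite r2_0 r3_0 !mulr0 !subr0.
Qed.

Lemma horner_theta_eq0 (p : {poly rat}) :
  (size p <= 4)%N -> (map_poly ratr p).[theta] = 0 -> p = 0.
Proof.
move=> size_p.
have size_map : (size (map_poly (@ratr algC) p) <= 4)%N by rewrite size_map_poly.
rewrite (horner_coef_wide _ size_map) !big_ord_recl big_ord0 /= !coef_map /= /bump /= !add1n.
rewrite expr0 expr1 mulr1 addr0 !addrA => /Crat_powers_theta_eq0[]; rewrite ?Crat_rat //.
move=> p0 p1 p2 p3; apply/polyP => i; rewrite coef0.
have [i_small|i_large] := ltnP i 4; last by rewrite nth_default ?(leq_trans size_p).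
apply: (fmorph_inj (@ratr algC)); rewrite rmorph0.
by case: i i_small => [|[|[|[|]]]].
Qed.

Lemma minCpoly_theta : minCpoly theta = map_poly intr quartic.
Proof.
have [p [def_minC p_monic] dvd_p] := minCpolyP theta.
have quartic_rat :
    map_poly ratr (map_poly intr quartic : {poly rat}) = map_poly intr quartic :> {poly algC}.
  by apply/polyP => i; rewrite !coef_map /= ratr_int.
have minC_dvd : minCpoly theta %| map_poly intr quartic.
  rewrite def_minC -quartic_rat dvdp_map -dvd_p quartic_rat.
  exact: (root_quartic_sigma ord0).
have size_quartic : size (map_poly intr quartic : {poly algC}) = 5%N.
  by rewrite quartic_factor size_prod_XsubC /index_enum /= -enumT size_enum_ord.
have size_minC_gt4 : ~ (size (minCpoly theta) <= 4)%N.
  rewrite def_minC size_map_poly => small.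
  have p0 : p = 0.
    by apply: horner_theta_eq0 => //; apply/eqP; rewrite -def_minC; exact: root_minCpoly.
  by move: p_monic; rewrite p0 monicE lead_coef0 eq_sym oner_eq0.
apply/eqP; rewrite -eqp_monic ?minCpoly_monic ?map_quartic_monic //.
rewrite -dvdp_size_eqp // size_quartic; apply/eqP.
have := dvdp_leq (monic_neq0 map_quartic_monic) minC_dvd; rewrite size_quartic.
by move=> le5; apply/eqP; rewrite eqn_leq le5 ltnNge; apply/negP.
Qed.

Lemma root_sigma_theta (q : {poly rat}) j :
  root (map_poly ratr q) theta -> root (map_poly ratr q) (sigma_theta j).
Proof.
have [p [def_minC _] dvd_p] := minCpolyP theta.
rewrite dvd_p -(dvdp_map (@ratr algC)) -def_minC minCpoly_theta => dvd_q.
exact: root_dvdp dvd_q (root_quartic_sigma j).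
Qed.

Lemma root_minCpoly_sigma (p : {poly rat}) j :
  root (minCpoly (map_poly ratr p).[theta]) (map_poly ratr p).[sigma_theta j].
Proof.
have [q [def_minC _] _] := minCpolyP (map_poly ratr p).[theta].
rewrite def_minC /root -horner_comp -map_comp_poly; apply: root_sigma_theta.
by rewrite /root map_comp_poly horner_comp -def_minC; exact: root_minCpoly.
Qed.

Lemma Aint_sigma (p : {poly rat}) j :
  (map_poly ratr p).[theta] \in Aint -> (map_poly ratr p).[sigma_theta j] \in Aint.
Proof. exact: root_monic_Aint (root_minCpoly_sigma p j) (minCpoly_monic _). Qed.

Lemma sigma_theta_inj : injective sigma_theta.
Proof.
have neg_neq (x : algC) : x != 0 -> x <> - x /\ - x <> x.
  move=> x_neq0; suff x_neqN : x != - x by split; apply/eqP; rewrite // eq_sym.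
  by rewrite -subr_eq0 opprK -mulr2n mulrn_eq0.
move=> i j eq_ij.
have eq_sqrt2 : sigma_sqrt2 i = sigma_sqrt2 j.
  have opp_k_neq0 : - k%:R != 0 :> algC by rewrite oppr_eq0 natr_k_neq0.
  move/(congr1 (fun x => x ^+ 2)): eq_ij.
  by rewrite !sigma_theta_sq => /(mulfI opp_k_neq0)/addrI.
have [theta_neq phi_neq] := (neg_neq _ theta_neq0, neg_neq _ phi_neq0).
have sqrt2_neq := neg_neq _ (lt0r_neq0 sqrt2_gt0).
apply: val_inj; move: eq_ij eq_sqrt2.
case: i j => [[|[|[|[|?]]]] ?] [[|[|[|[|?]]]] ?] //=.
all: rewrite /sigma_theta /sigma_sqrt2 /= => eq_theta eq_sqrt2; exfalso.
all: first [exact: theta_neq.1 eq_theta | exact: theta_neq.2 eq_theta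
           | exact: phi_neq.1 eq_theta | exact: phi_neq.2 eq_theta
           | exact: sqrt2_neq.1 eq_sqrt2 | exact: sqrt2_neq.2 eq_sqrt2].
Qed.

Lemma sigma_inj_of_generates (p g : {poly rat}) :
  (map_poly ratr g).[(map_poly ratr p).[theta]] = theta ->
  injective (fun j => (map_poly ratr p).[sigma_theta j]).
Proof.
move=> g_p_theta.
have g_p_sigma j : (map_poly ratr g).[(map_poly ratr p).[sigma_theta j]] = sigma_theta j.
  have : root (map_poly ratr (g \Po p - 'X)) (sigma_theta j).
    apply: root_sigma_theta.
    by rewrite /root rmorphB /= map_polyX map_comp_poly !hornerE horner_comp g_p_theta subrr.
  by rewrite /root rmorphB /= map_polyX map_comp_poly !hornerE horner_comp subr_eq0 => /eqP.
by move=> i j eq_ij; apply: sigma_theta_inj; rewrite -g_p_sigma eq_ij g_p_sigma.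
Qed.

Hypotheses (k_odd : odd k) (k_sqf : squarefree k).

Section IntegralBasis.

Variables a b c d : algC.
Hypotheses (a_rat : a \in Crat) (b_rat : b \in Crat) (c_rat : c \in Crat) (d_rat : d \in Crat).
Hypothesis coords_Aint : forall j, sigma_coords a b c d j \in Aint.

Let Aint_sum i j : sigma_coords a b c d i + sigma_coords a b c d j \in Aint.
Proof. exact: rpredD. Qed.

Lemma Aint_coords_double : 2 * a \in Num.int /\ 2 * b \in Num.int.
Proof.
apply: Aint_sqrt2_coords; rewrite ?rpredM ?rpred_nat //.
  rewrite (_ : _ + _ = sigma_coords a b c d 0 + sigma_coords a b c d 1) ?Aint_sum //.
  by rewrite /sigma_coords /sigma_sqrt2 /sigma_theta /=; ring.
rewrite (_ : _ - _ = sigma_coords a b c d 2 + sigma_coords a b c d 3) ?Aint_sum //.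
by rewrite /sigma_coords /sigma_sqrt2 /sigma_theta /=; ring.
Qed.

(* The relative norm of a + b sqrt2 + (c + d sqrt2) theta down to Q(sqrt2) is
   rel_norm0 + rel_norm1 sqrt2. *)
Definition rel_norm0 := a * a + 2 * (b * b) + k%:R * (2 * (c * c) + 4 * (d * d) + 4 * (c * d)).
Definition rel_norm1 := 2 * (a * b) + k%:R * (c * c + 2 * (d * d) + 4 * (c * d)).

Lemma Aint_coords_norm : rel_norm0 \in Num.int /\ rel_norm1 \in Num.int.
Proof.
have [sqrt2_sqr theta_sqr phi_sqr] := And3 sqrt2_sq theta_sq phi_sq.
apply: Aint_sqrt2_coords.
1,2: by rewrite /rel_norm0 /rel_norm1 ?(rpredD, rpredM, rpred_nat).
  rewrite (_ : _ + _ = sigma_coords a b c d 0 * sigma_coords a b c d 1) ?rpredM //.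
  rewrite /rel_norm0 /rel_norm1 /sigma_coords /sigma_sqrt2 /sigma_theta /=.
  by ring: sqrt2_sqr theta_sqr.
rewrite (_ : _ - _ = sigma_coords a b c d 2 * sigma_coords a b c d 3) ?rpredM //.
rewrite /rel_norm0 /rel_norm1 /sigma_coords /sigma_sqrt2 /sigma_theta /=.
by ring: sqrt2_sqr phi_sqr.
Qed.

Lemma Aint_coords_scaled :
  - 4 * k%:R * (c + d) \in Num.int /\ - 2 * k%:R * (c + 2 * d) \in Num.int.
Proof.
have [sqrt2_sqr theta_sqr phi_sqr] := And3 sqrt2_sq theta_sq phi_sq.
have [theta_Aint phi_Aint] := (sigma_theta_Aint 0, sigma_theta_Aint 2).
apply: Aint_sqrt2_coords.
1,2: by rewrite ?(rpredD, rpredM, rpredN, rpred_nat).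
  rewrite (_ : _ + _ = theta * (sigma_coords a b c d 0 - sigma_coords a b c d 1)).
    by rewrite rpredM ?rpredB.
  by rewrite /sigma_coords /sigma_sqrt2 /sigma_theta /=; ring: sqrt2_sqr theta_sqr.
rewrite (_ : _ - _ = phi * (sigma_coords a b c d 2 - sigma_coords a b c d 3)).
  by rewrite rpredM ?rpredB.
by rewrite /sigma_coords /sigma_sqrt2 /sigma_theta /=; ring: sqrt2_sqr phi_sqr.
Qed.

Lemma Aint_coords_int : [/\ a \in Num.int, b \in Num.int, c \in Num.int & d \in Num.int].
Proof.
have [/intrP[A defA] /intrP[B defB]] := Aint_coords_double.
have [/intrP[N0 defN0] /intrP[N1 defN1]] := Aint_coords_norm.
have [/intrP[P defP] /intrP[Q defQ]] := Aint_coords_scaled.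
have [g def_g] : exists g : int, 4 * k%:R * c = g%:~R.
  by exists (2 * Q - 2 * P); rewrite rmorphB !rmorphM /= -defP -defQ; ring.
have [h def_h] : exists h : int, 4 * k%:R * d = h%:~R.
  by exists (P - 2 * Q); rewrite rmorphB !rmorphM /= -defP -defQ; ring.
have [||dvd_A dvd_B dvd_g dvd_h] := @int_coords_of_norm_eqs k A B g h N0 N1 k_odd k_sqf.
- apply: (@intr_inj algC); rewrite !(rmorphD, rmorphM) /= -pmulrn.
  by rewrite -defN0 -defA -defB -def_g -def_h /rel_norm0; ring.
- apply: (@intr_inj algC); rewrite !(rmorphD, rmorphM) /= -pmulrn.
  by rewrite -defN1 -defA -defB -def_g -def_h /rel_norm1; ring.
have four_k_neq0 : 4 * k%:Z != 0 by rewrite mulf_neq0 // eqz_nat -lt0n.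
split; [exact: Num_int_of_dvdz dvd_A defA | exact: Num_int_of_dvdz dvd_B defB | |].
  by apply: Num_int_of_dvdz four_k_neq0 dvd_g _; rewrite rmorphM /= -pmulrn.
by apply: Num_int_of_dvdz four_k_neq0 dvd_h _; rewrite rmorphM /= -pmulrn.
Qed.

End IntegralBasis.

Lemma Aint_horner_coords (p : {poly rat}) : (map_poly ratr p).[theta] \in Aint ->
  exists a b c d : int, forall j,
    (map_poly ratr p).[sigma_theta j] = sigma_coords a%:~R b%:~R c%:~R d%:~R j.
Proof.
move=> p_Aint; have [a [b [c [d def_p]]]] := horner_sigma_coords p.
have coords_Aint j : sigma_coords (ratr a) (ratr b) (ratr c) (ratr d) j \in Aint.
  by rewrite -def_p Aint_sigma.
have [/intrP[a' def_a] /intrP[b' def_b] /intrP[c' def_c] /intrP[d' def_d]] :=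
  Aint_coords_int (Crat_rat a) (Crat_rat b) (Crat_rat c) (Crat_rat d) coords_Aint.
by exists a', b', c', d' => j; rewrite def_p def_a def_b def_c def_d.
Qed.

Definition sqrt2_poly : {poly rat} := - (k%:R)^-1 *: 'X^2 - 2%:P.

Definition integral_basis (i : 'I_4) : {poly rat} :=
  nth 0 [:: 1; sqrt2_poly; 'X; sqrt2_poly * 'X] i.

Lemma horner_sqrt2_poly j : (map_poly ratr sqrt2_poly).[sigma_theta j] = sigma_sqrt2 j.
Proof.
rewrite rmorphB /= map_polyZ map_polyXn map_polyC /=.
rewrite hornerD hornerN hornerZ hornerXn hornerC sigma_theta_sq rmorphN fmorphV !rmorph_nat.
by field; rewrite natr_k_neq0.
Qed.

Lemma horner_integral_basis i j : (map_poly ratr (integral_basis i)).[sigma_theta j] =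
  nth 0 [:: 1; sigma_sqrt2 j; sigma_theta j; sigma_sqrt2 j * sigma_theta j] i.
Proof.
case: i => [[|[|[|[|]]]] //= ?]; rewrite /integral_basis /=.
all: by rewrite ?rmorph1 ?rmorphM /= ?map_polyX ?hornerE ?horner_sqrt2_poly.
Qed.

Lemma det_integral_basis_sq :
  (\det (\matrix_(i < 4, j < 4) (map_poly ratr (integral_basis i)).[sigma_theta j])) ^+ 2
  = 2048 * k%:R ^+ 2.
Proof.
pose s j : algC := nth 0 [:: sqrt2; sqrt2; - sqrt2; - sqrt2] j.
pose t j : algC := nth 0 [:: theta; - theta; phi; - phi] j.
pose f i j := nth 0 [:: 1; s j; t j; s j * t j] i.
have -> : \matrix_(i < 4, j < 4) (map_poly ratr (integral_basis i)).[sigma_theta j]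
          = \matrix_(i < 4, j < 4) f i j.
  by apply/matrixP => i j; rewrite !mxE horner_integral_basis.
have [sqrt2_sqr theta_sqr phi_sqr] := And3 sqrt2_sq theta_sq phi_sq.
by rewrite det_mx4 /f /s /t /=; ring: sqrt2_sqr theta_sqr phi_sqr.
Qed.

Lemma abs_disc_theta : abs_disc theta (2048 * k%:R ^+ 2).
Proof.
have basis_theta i : (map_poly ratr (integral_basis i)).[theta] =
    nth 0 [:: 1; sqrt2; theta; sqrt2 * theta] i := horner_integral_basis i 0.
exists 4%N, sigma_theta, integral_basis.
split; last split; last split; last split.
- by rewrite minCpoly_theta quartic_factor.
- move=> i; rewrite basis_theta.
  have theta_Aint : theta \in Aint := sigma_theta_Aint 0.
  by case: i => [[|[|[|[|]]]] //= ?]; rewrite ?rpredM ?sqrt2_Aint ?rpred1.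
- move=> _ [[p ->] p_Aint]; have [a [b [c [d def_p]]]] := Aint_horner_coords p_Aint.
  exists (fun i => nth 0 [:: a; b; c; d] i).
  rewrite (def_p ord0) !big_ord_recl big_ord0 !basis_theta.
  by rewrite /sigma_coords /sigma_sqrt2 /sigma_theta /=; ring.
- move=> c; rewrite !big_ord_recl big_ord0 !basis_theta /=.
  set c0 := c _; set c1 := c _; set c2 := c _; set c3 := c _ => eq0.
  have [|||||c0_eq0 c1_eq0 c2_eq0 c3_eq0] := @Crat_coords_eq0 c0%:~R c1%:~R c2%:~R c3%:~R.
  1-4: exact: rpred_int.
  + by rewrite -[RHS]eq0; ring.
  move=> i; apply: (@intr_inj algC); rewrite rmorph0.
  case: i => [[|[|[|[|//]]]] lt_i4];
    [rewrite -c0_eq0 /c0 | rewrite -c1_eq0 /c1 | rewrite -c2_eq0 /c2 | rewrite -c3_eq0 /c3];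
    by do 2!apply: congr1; apply: val_inj.
- by rewrite det_integral_basis_sq ger0_norm // mulr_ge0 ?ler0n // exprn_ge0 ?ler0n.
Qed.

Lemma normC_theta_ge1 : 1 <= `|theta|.
Proof.
rewrite -(ler_pXn2r (n := 2)) ?nnegrE ?normr_ge0 // expr1n normC_theta_sq.
rewrite mulr_ege1 ?ler1n // (@le_trans _ _ 2) ?ler1n //.
by rewrite lerDl ltW ?sqrt2_gt0.
Qed.

Lemma normC_phi_ge1 : (3 <= k)%N -> 1 <= `|phi|.
Proof.
move=> k_ge3; rewrite -(ler_pXn2r (n := 2)) ?nnegrE ?normr_ge0 // expr1n normC_phi_sq.
apply: (@le_trans _ _ (3%:R * (2 - sqrt2))).
  rewrite (_ : 3%:R * (2 - sqrt2) = 1 + (5%:R - sqrt2 * 3%:R)); last by ring.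
  by rewrite lerDl subr_ge0 ltW // sqrt2_mul3_lt5.
by rewrite ler_wpM2r ?ler_nat // subr_ge0 ltW ?sqrt2_lt2.
Qed.

Lemma mahler_theta : (3 <= k)%N -> mahler theta (2 * k%:R ^+ 2).
Proof.
move=> k_ge3; exists quartic; split.
  by split; [exact: zcontents_monic quartic_monic | rewrite minCpoly_theta eqpxx].
split; first exact: monic_neq0 map_quartic_monic.
exists [:: theta; - theta; phi; - phi].
rewrite (monicP map_quartic_monic) scale1r normr1 mul1r; split.
  by rewrite quartic_factor !big_cons big_nil !big_ord_recl big_ord0.
rewrite !big_cons big_nil !normrN normC_theta_ge1 normC_phi_ge1 // mulr1.
have [theta_sqr phi_sqr sqrt2_sqr] := And3 normC_theta_sq normC_phi_sq sqrt2_sq.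
by ring: theta_sqr phi_sqr sqrt2_sqr.
Qed.

Lemma prod_norm_sigma_coords_ge (a b c d : int) :
  injective (sigma_coords a%:~R b%:~R c%:~R d%:~R) ->
  2 * k%:R ^+ 2 <= \prod_(j < 4) `|sigma_coords a%:~R b%:~R c%:~R d%:~R j|.
Proof.
set x := sigma_coords _ _ _ _ => x_inj.
pose beta j : algC := c%:~R + d%:~R * sigma_sqrt2 j.
have beta_le j : `|beta j * sigma_theta j| <= `|x j|.
  apply: normC_imag_le; first by rewrite realD ?realM ?sigma_sqrt2_real ?Rreal_int.
  rewrite rmorphM /= sigma_theta_conj mulrN; congr (- (_ * _)).
  by apply/CrealP; rewrite realD ?realM ?sigma_sqrt2_real ?Rreal_int.
have beta_neq0 i j : i != j -> sigma_sqrt2 i = sigma_sqrt2 j -> beta i != 0.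
  move=> neq_ij eq_sqrt2; apply: contra neq_ij => /eqP beta_i0; apply/eqP/x_inj.
  have beta_j0 : beta j = 0 by rewrite /beta -eq_sqrt2.
  rewrite /x /sigma_coords -/(beta i) -/(beta j) beta_i0 beta_j0 eq_sqrt2.
  by rewrite !mul0r.
set v := c%:~R + d%:~R * sqrt2; set v' := c%:~R - d%:~R * sqrt2.
have v_neq0 : v != 0 by have := beta_neq0 0 1 isT erefl.
have v'_neq0 : v' != 0 by have := beta_neq0 2 3 isT erefl; rewrite /beta /= mulrN.
have vv'_ge1 : 1 <= `|v * v'|.
  rewrite norm_intr_ge1 ?mulf_neq0 // (_ : v * v' = (c * c - 2 * (d * d))%:~R) ?rpred_int //.
  have sqrt2_sqr := sqrt2_sq.
  by rewrite /v /v' rmorphB !rmorphM /=; ring: sqrt2_sqr.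
have -> : \prod_(j < 4) `|x j| = `|x 0| * (`|x 1| * (`|x 2| * (`|x 3| * 1))).
  by rewrite !big_ord_recl big_ord0.
apply: (@le_trans _ _ (`|beta 0 * sigma_theta 0| * (`|beta 1 * sigma_theta 1|
          * (`|beta 2 * sigma_theta 2| * (`|beta 3 * sigma_theta 3| * 1))))); last first.
  by rewrite !ler_pM ?normr_ge0 ?mulr_ge0 ?beta_le.
rewrite /beta /sigma_sqrt2 /sigma_theta /= !normrM !normrN -/v mulrN -/v'.
have -> : `|v| * `|theta| * (`|v| * `|theta| * (`|v'| * `|phi| * (`|v'| * `|phi| * 1)))
          = `|v * v'| ^+ 2 * (2 * k%:R ^+ 2).
  have [theta_sqr phi_sqr sqrt2_sqr] := And3 normC_theta_sq normC_phi_sq sqrt2_sq.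
  by rewrite normrM; ring: theta_sqr phi_sqr sqrt2_sqr.
by rewrite ler_peMl ?mulr_ge0 ?exprn_ge0 ?ler0n // exprn_ege1.
Qed.

Lemma mahler_OK_ge x m :
  in_OK theta x -> generates theta x -> mahler x m -> 2 * k%:R ^+ 2 <= m.
Proof.
move=> [[p ->] x_Aint] [_ [g def_theta]] [P [[_ P_minC] mahler_P]].
have [a [b [c [d def_p]]]] := Aint_horner_coords x_Aint.
have x_inj := sigma_inj_of_generates (esym def_theta).
have coords_inj : injective (sigma_coords a%:~R b%:~R c%:~R d%:~R).
  by move=> i j; rewrite -!def_p => /x_inj.
apply: le_trans (prod_norm_sigma_coords_ge coords_inj) _.
rewrite -(eq_bigr _ (fun j _ => congr1 _ (def_p j))) -(big_map _ xpredT (fun z => `|z|)).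
apply: mahler_poly_ge_prod_roots mahler_P _ _ _.
- by rewrite lead_coef_map_inj ?rpred_int //; exact: intr_inj.
- by rewrite map_inj_uniq ?index_enum_uniq.
- apply/allP => _ /mapP[j _ ->]; rewrite (eqp_root P_minC).
  exact: root_minCpoly_sigma.
Qed.

End QuarticField.

Theorem corollary6p6 (k : nat) :
  (1 < k)%N -> odd k -> squarefree k ->
  let theta : algC := sqrtC (- (k%:R) * (2 + sqrtC 2)) in
  exists D m : algC,
    abs_disc theta D /\ mahler_OK theta m /\
    D / 2359296%:R <= m /\ m <= D / 4%:R.
Proof.
move=> k_gt1 k_odd k_sqf theta'.
have k_gt0 : (0 < k)%N := ltnW k_gt1.
have k_ge3 : (3 <= k)%N by case: k k_gt1 k_odd {k_sqf theta' k_gt0} => [|[|[|k]]].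
exists (2048 * k%:R ^+ 2), (2 * k%:R ^+ 2); split; first exact: abs_disc_theta.
split; first split.
- have theta_in_QQ : in_QQ (theta k) (theta k) by exists 'X; rewrite map_polyX hornerX.
  exists (theta k); split; first by split; last exact: (sigma_theta_Aint k ord0).
  by split; [split | exact: mahler_theta].
- by move=> x m'; apply: mahler_OK_ge.
rewrite -!natrX -!natrM; split.
  rewrite ler_pdivrMr ?ltr0n // -natrM ler_nat.
  rewrite [(2048 * _)%N]mulnC [(2 * _)%N]mulnC -mulnA leq_mul2l.
  by apply/orP; right.
by rewrite ler_pdivlMr ?ltr0n // -natrM ler_nat; nia.
Qed.
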